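(* Let $d$ be an integer and $x$ a real number with $0<d\leqslant x/2$. Then $$\sum_{K_d-d<k\leqslant K_d}\Big(d^2\lfloor x/k\rfloor+\frac{2dx}{\lfloor x/k\rfloor}-x^2F(x/k)\Big)=\frac83\,d^2\sqrt{dx}+O(d^{7/2}x^{-1/2})+O(d^2),$$ where $k$ runs over integers, with absolute implied constants.
   Context: $\lfloor\cdot\rfloor$ denotes the integer part. For an integer $d\geqslant 0$ and real $x>0$, $K_d=K_d(x)=\big\lfloor \big(d+\sqrt{d^2+4dx}\,\big)/2\big\rfloor$. For real $t$, $F(t)=\sum_{n>t-1}\frac{1}{n^2(n+1)^2}$, summed over positive integers $n>t-1$. *)

From Stdlib Require Import Reals Lra Lia ZArith List.
From Coquelicot Require Import Coquelicot.
Open Scope R_scope.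

Definition floorZ (r : R) : Z := Int_part r.

Definition Kd (d : Z) (x : R) : Z :=
  floorZ ((IZR d + sqrt (IZR d ^ 2 + 4 * IZR d * x)) / 2).

(* F(t) = sum over positive integers n > t - 1 of 1/(n^2 (n+1)^2);
   positive integers are indexed as n = m+1, m : nat. *)
Definition F (t : R) : R :=
  Series (fun m : nat =>
    let n := INR (S m) in
    if Rlt_dec (t - 1) n then 1 / (n ^ 2 * (n + 1) ^ 2) else 0).

Definition sum_Ioc (a b : Z) (f : Z -> R) : R :=
  fold_right Rplus 0
    (map (fun i : nat => f (a + 1 + Z.of_nat i)%Z) (seq 0 (Z.to_nat (b - a)))).

Definition summand (d : Z) (x : R) (k : Z) : R :=
  let q := IZR (floorZ (x / IZR k)) in
  IZR d ^ 2 * q + 2 * IZR d * x / q - x ^ 2 * F (x / IZR k).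

(* With K0 = (d + sqrt (d^2 + 4 d x)) / 2 one has K0 (K0 - d) = d x, so for k in the
   window (K0 - d, K0] the quotient x / k lies in [u - 1, u), where u = K0 / d solves
   u (u - 1) = x / d = s^2; hence q = [x / k] is within 2 of s.  Telescoping
   1/(3 n^3) and 1/(3 n^3) - 1/n^5 gives F (x / k) = 1/(3 q^3) + O(q^-5), and with
   x = d s^2 each summand is (8/3) d^2 s + d^2 (q - s)^3 (3 q + s) / (3 q^3)
   + O(d^2 s^4 / q^5) = (8/3) d^2 s + O(d^2 / s).  The d summands add up to
   (8/3) d^3 s = (8/3) d^2 sqrt (d x) with error O(d^3 / s) = O(d^(7/2) x^(-1/2)). *)

From Stdlib Require Import Reals Lra Lia ZArith List.
From Coquelicot Require Import Coquelicot.
Open Scope R_scope.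

Definition tail_from (N : nat) (a : nat -> R) (m : nat) : R :=
  if (N <=? m)%nat then a m else 0.

Lemma sum_n_tail_telescoping (g : nat -> R) (N n : nat) :
  sum_n (tail_from N (fun m => g m - g (S m))) n = g (Nat.min N (S n)) - g (S n).
Proof.
  unfold tail_from; induction n as [|n IH].
  - rewrite sum_O. destruct (Nat.leb_spec N 0).
    + rewrite Nat.min_l by lia. f_equal; f_equal; lia.
    + rewrite Nat.min_r by lia. lra.
  - rewrite sum_Sn, IH. unfold plus; simpl.
    destruct (Nat.leb_spec N (S n)).
    + rewrite !Nat.min_l by lia. ring.
    + rewrite !Nat.min_r by lia. ring.
Qed.

Lemma is_series_tail_telescoping (g : nat -> R) (N : nat) :
  is_lim_seq g 0 -> is_series (tail_from N (fun m => g m - g (S m))) (g N).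
Proof.
  intros Hg.
  assert (Hlim : is_lim_seq (fun n => g N - g (S n)) (g N - 0)).
  { apply is_lim_seq_minus'; [apply is_lim_seq_const | exact (proj1 (is_lim_seq_incr_1 g 0) Hg)]. }
  rewrite Rminus_0_r in Hlim.
  enough (H : is_lim_seq (sum_n (tail_from N (fun m => g m - g (S m)))) (g N)) by exact H.
  apply (is_lim_seq_ext_loc (fun n => g N - g (S n))); [|exact Hlim].
  exists N; intros n Hn. rewrite sum_n_tail_telescoping, Nat.min_l by lia. reflexivity.
Qed.

Lemma sum_n_le_compat (a b : nat -> R) :
  (forall m, a m <= b m) -> forall n, sum_n a n <= sum_n b n.
Proof.
  intros Hab n; induction n as [|n IH].
  - rewrite !sum_O; apply Hab.
  - rewrite !sum_Sn; unfold plus; simpl; specialize (Hab (S n)); lra.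
Qed.

Lemma is_series_le (a b : nat -> R) (la lb : R) :
  (forall m, a m <= b m) -> is_series a la -> is_series b lb -> la <= lb.
Proof.
  intros Hab Ha Hb.
  exact (is_lim_seq_le _ _ la lb (sum_n_le_compat a b Hab) Ha Hb).
Qed.

Lemma Series_tail_between_telescoping (a gl gu : nat -> R) (N : nat) :
  is_lim_seq gl 0 -> is_lim_seq gu 0 ->
  (forall m, 0 <= a m) ->
  (forall m, gl m - gl (S m) <= a m <= gu m - gu (S m)) ->
  gl N <= Series (tail_from N a) <= gu N.
Proof.
  intros Hl Hu Ha Hab.
  assert (Sl := is_series_tail_telescoping gl N Hl).
  assert (Su := is_series_tail_telescoping gu N Hu).
  assert (Hex : ex_series (tail_from N a)).
  { apply (@ex_series_le R_AbsRing R_CompleteNormedModule _ (tail_from N (fun m => gu m - gu (S m)))).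
    - intros m; change norm with Rabs; unfold tail_from; simpl.
      destruct (N <=? m)%nat; [specialize (Ha m); specialize (Hab m) | ];
        rewrite ?Rabs_R0, ?Rabs_pos_eq by auto; lra.
    - exists (gu N); exact Su. }
  assert (Sa := Series_correct _ Hex).
  assert (Hlo : forall m, tail_from N (fun m => gl m - gl (S m)) m <= tail_from N a m)
    by (intros m; unfold tail_from; destruct (N <=? m)%nat; [apply Hab | lra]).
  assert (Hhi : forall m, tail_from N a m <= tail_from N (fun m => gu m - gu (S m)) m)
    by (intros m; unfold tail_from; destruct (N <=? m)%nat; [apply Hab | lra]).
  split; [exact (is_series_le _ _ _ _ Hlo Sl Sa) | exact (is_series_le _ _ _ _ Hhi Sa Su)].
Qed.

Lemma is_lim_seq_0_of_le_inv (g : nat -> R) (A : R) :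
  (forall m, Rabs (g m) <= A / INR (S m)) -> is_lim_seq g 0.
Proof.
  intros Hg.
  assert (Hinv : is_lim_seq (fun m => A / INR (S m)) 0).
  { replace (Finite 0) with (Rbar_mult A 0) by (simpl; f_equal; ring).
    apply is_lim_seq_scal_l.
    replace (Finite 0) with (Rbar_inv p_infty) by reflexivity.
    apply is_lim_seq_inv; [|discriminate].
    exact (proj1 (is_lim_seq_incr_1 INR p_infty) is_lim_seq_INR). }
  apply (is_lim_seq_le_le (fun m => - (A / INR (S m))) g (fun m => A / INR (S m)));
    [intros m; apply Rabs_le_between, Hg | | exact Hinv].
  replace (Finite 0) with (Rbar_opp 0) by (simpl; f_equal; ring).
  exact (proj1 (is_lim_seq_opp _ _) Hinv).
Qed.

Definition F_term (y : R) : R := 1 / (y ^ 2 * (y + 1) ^ 2).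
Definition F_upper (y : R) : R := 1 / (3 * y ^ 3).
Definition F_lower (y : R) : R := 1 / (3 * y ^ 3) - 1 / y ^ 5.

Lemma F_term_le_F_upper_step (y : R) : 0 < y -> F_term y <= F_upper y - F_upper (y + 1).
Proof.
  intros Hy; unfold F_term, F_upper.
  assert (E : 1 / (3 * y ^ 3) - 1 / (3 * (y + 1) ^ 3) - 1 / (y ^ 2 * (y + 1) ^ 2)
              = / (3 * y ^ 3 * (y + 1) ^ 3)) by (field; lra).
  assert (0 < / (3 * y ^ 3 * (y + 1) ^ 3)).
  { apply Rinv_0_lt_compat; repeat apply Rmult_lt_0_compat; try apply pow_lt; lra. }
  lra.
Qed.

Lemma F_lower_step_le_F_term (y : R) : 1 <= y -> F_lower y - F_lower (y + 1) <= F_term y.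
Proof.
  intros Hy; unfold F_term, F_lower.
  assert (E : 1 / (y ^ 2 * (y + 1) ^ 2)
              - (1 / (3 * y ^ 3) - 1 / y ^ 5 - (1 / (3 * (y + 1) ^ 3) - 1 / (y + 1) ^ 5))
              = (3 * ((y + 1) ^ 5 - y ^ 5) - y ^ 2 * (y + 1) ^ 2) * / (3 * y ^ 5 * (y + 1) ^ 5))
    by (field; lra).
  (* (y+1)^5 - y^5 >= 5 y^4, while y^2 (y+1)^2 <= 4 y^4 for y >= 1 *)
  assert (0 <= 3 * ((y + 1) ^ 5 - y ^ 5) - y ^ 2 * (y + 1) ^ 2).
  { assert (1 <= y ^ 2) by nra. nra. }
  assert (0 < / (3 * y ^ 5 * (y + 1) ^ 5)).
  { apply Rinv_0_lt_compat; repeat apply Rmult_lt_0_compat; try apply pow_lt; lra. }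
  assert (0 <= (3 * ((y + 1) ^ 5 - y ^ 5) - y ^ 2 * (y + 1) ^ 2) * / (3 * y ^ 5 * (y + 1) ^ 5))
    by (apply Rmult_le_pos; lra).
  lra.
Qed.

Lemma inv_pow_le_inv (y : R) (k : nat) : 1 <= y -> (1 <= k)%nat -> 1 / y ^ k <= 1 / y.
Proof.
  intros Hy Hk.
  apply Rmult_le_compat_l; [lra|]. apply Rinv_le_contravar; [lra|].
  replace k with (S (k - 1)) by lia. simpl.
  rewrite <- (Rmult_1_r y) at 1. apply Rmult_le_compat_l; [lra|]. apply pow_R1_Rle; lra.
Qed.

Lemma INR_S_ge_1 (m : nat) : 1 <= INR (S m).
Proof. rewrite S_INR. pose proof (pos_INR m). lra. Qed.

Lemma F_upper_lim : is_lim_seq (fun m => F_upper (INR (S m))) 0.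
Proof.
  apply (is_lim_seq_0_of_le_inv _ 1); intros m; unfold F_upper.
  pose proof (INR_S_ge_1 m) as Hn.
  pose proof (inv_pow_le_inv _ 3 Hn ltac:(lia)).
  assert (0 < 1 / INR (S m) ^ 3) by (apply Rdiv_lt_0_compat, pow_lt; lra).
  replace (1 / (3 * INR (S m) ^ 3)) with (/ 3 * (1 / INR (S m) ^ 3)) by (field; lra).
  apply Rabs_le; lra.
Qed.

Lemma F_lower_lim : is_lim_seq (fun m => F_lower (INR (S m))) 0.
Proof.
  apply (is_lim_seq_0_of_le_inv _ 2); intros m; unfold F_lower.
  pose proof (INR_S_ge_1 m) as Hn.
  pose proof (inv_pow_le_inv _ 3 Hn ltac:(lia)).
  pose proof (inv_pow_le_inv _ 5 Hn ltac:(lia)).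
  assert (0 < 1 / INR (S m) ^ 3) by (apply Rdiv_lt_0_compat, pow_lt; lra).
  assert (0 < 1 / INR (S m) ^ 5) by (apply Rdiv_lt_0_compat, pow_lt; lra).
  replace (1 / (3 * INR (S m) ^ 3)) with (/ 3 * (1 / INR (S m) ^ 3)) by (field; lra).
  apply Rabs_le; lra.
Qed.

Lemma F_eq_Series_tail (z : Z) (t : R) :
  (1 <= z)%Z -> IZR z <= t < IZR z + 1 ->
  F t = Series (tail_from (Z.to_nat (z - 1)) (fun m => F_term (INR (S m)))).
Proof.
  intros Hz Ht; unfold F, tail_from, F_term. apply Series_ext; intros m.
  rewrite S_INR, INR_IZR_INZ.
  destruct (Rlt_dec _ _) as [Hlt | Hge]; destruct (Nat.leb_spec (Z.to_nat (z - 1)) m) as [Hle | Hgt];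
    try reflexivity; exfalso.
  - assert (IZR (Z.of_nat m + 1) <= IZR (z - 1)) by (apply IZR_le; lia).
    rewrite plus_IZR, minus_IZR in *; lra.
  - apply Hge. assert (IZR (z - 1) <= IZR (Z.of_nat m)) by (apply IZR_le; lia).
    rewrite minus_IZR in *; lra.
Qed.

Lemma F_near_inv_cube (z : Z) (t : R) :
  (1 <= z)%Z -> IZR z <= t < IZR z + 1 ->
  Rabs (F t - 1 / (3 * IZR z ^ 3)) <= 1 / IZR z ^ 5.
Proof.
  intros Hz Ht. rewrite (F_eq_Series_tail z t Hz Ht).
  assert (HN : INR (S (Z.to_nat (z - 1))) = IZR z).
  { rewrite INR_IZR_INZ, Nat2Z.inj_succ, Z2Nat.id by lia. f_equal; lia. }
  assert (Hstep : forall m, INR (S (S m)) = INR (S m) + 1) by (intros m; apply S_INR).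
  destruct (Series_tail_between_telescoping (fun m => F_term (INR (S m)))
             (fun m => F_lower (INR (S m))) (fun m => F_upper (INR (S m))) (Z.to_nat (z - 1))
             F_lower_lim F_upper_lim) as [Hlo Hhi].
  - intros m. pose proof (INR_S_ge_1 m). unfold F_term.
    apply Rlt_le, Rdiv_lt_0_compat; [lra|]. apply Rmult_lt_0_compat; apply pow_lt; lra.
  - intros m. rewrite Hstep. pose proof (INR_S_ge_1 m).
    split; [apply F_lower_step_le_F_term | apply F_term_le_F_upper_step]; lra.
  - rewrite HN in Hlo, Hhi. unfold F_lower, F_upper in *. apply Rabs_le. lra.
Qed.

Lemma summand_deviation_identity (D s q G : R) : q <> 0 ->
  D ^ 2 * q + 2 * D * (D * s ^ 2) / q - (D * s ^ 2) ^ 2 * G - 8 / 3 * D ^ 2 * s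
  = D ^ 2 * ((q - s) ^ 3 * (3 * q + s) / (3 * q ^ 3) + s ^ 4 * (1 / (3 * q ^ 3) - G)).
Proof. intros Hq; field; exact Hq. Qed.

Lemma cubic_deviation_bound (s q : R) : 1 <= q -> 0 < s -> Rabs (q - s) <= 2 ->
  Rabs ((q - s) ^ 3 * (3 * q + s) / (3 * q ^ 3)) <= 48 / s.
Proof.
  intros Hq Hs Hqs.
  assert (Hsq : s <= 3 * q) by (apply Rabs_le_between in Hqs; lra).
  assert (Hq3 : 0 < 3 * q ^ 3) by (apply Rmult_lt_0_compat; [lra | apply pow_lt; lra]).
  assert (Hcube : Rabs ((q - s) ^ 3) <= 2 ^ 3).
  { rewrite <- RPow_abs. apply pow_incr. split; [apply Rabs_pos | exact Hqs]. }
  unfold Rdiv; rewrite !Rabs_mult, (Rabs_pos_eq (3 * q + s)), Rabs_inv, (Rabs_pos_eq (3 * q ^ 3)) by lra.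
  apply Rle_trans with (2 ^ 3 * (6 * q) * / (3 * q ^ 3)).
  { apply Rmult_le_compat_r; [apply Rlt_le, Rinv_0_lt_compat; lra|].
    apply Rmult_le_compat; [apply Rabs_pos | lra | exact Hcube | lra]. }
  (* 16 / q^2 <= 48 / s because s <= 3 q <= 3 q^2 *)
  replace (2 ^ 3 * (6 * q) * / (3 * q ^ 3)) with (16 / q ^ 2) by (field; lra).
  apply Rmult_le_reg_r with (q ^ 2 * s); [apply Rmult_lt_0_compat; [apply pow_lt|]; lra|].
  replace (16 / q ^ 2 * (q ^ 2 * s)) with (16 * s) by (field; lra).
  replace (48 * / s * (q ^ 2 * s)) with (48 * q ^ 2) by (field; lra).
  nra.
Qed.

Lemma tail_deviation_bound (s q G : R) : 1 <= q -> 0 < s -> Rabs (q - s) <= 2 ->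
  Rabs (G - 1 / (3 * q ^ 3)) <= 1 / q ^ 5 ->
  Rabs (s ^ 4 * (1 / (3 * q ^ 3) - G)) <= 243 / s.
Proof.
  intros Hq Hs Hqs HG.
  assert (Hsq : s <= 3 * q) by (apply Rabs_le_between in Hqs; lra).
  assert (Hq5 : 0 < q ^ 5) by (apply pow_lt; lra).
  rewrite Rabs_mult, Rabs_pos_eq, Rabs_minus_sym by (apply pow_le; lra).
  apply Rle_trans with (s ^ 4 * (1 / q ^ 5)); [apply Rmult_le_compat_l; [apply pow_le; lra | exact HG]|].
  apply Rmult_le_reg_r with (q ^ 5 * s); [apply Rmult_lt_0_compat; lra|].
  replace (s ^ 4 * (1 / q ^ 5) * (q ^ 5 * s)) with (s ^ 5) by (field; lra).
  replace (243 / s * (q ^ 5 * s)) with ((3 * q) ^ 5) by (field; lra).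
  apply pow_incr; lra.
Qed.

Lemma summand_deviation_bound (D s q G : R) : 0 < D -> 1 <= q -> 0 < s -> Rabs (q - s) <= 2 ->
  Rabs (G - 1 / (3 * q ^ 3)) <= 1 / q ^ 5 ->
  Rabs (D ^ 2 * q + 2 * D * (D * s ^ 2) / q - (D * s ^ 2) ^ 2 * G - 8 / 3 * D ^ 2 * s)
  <= 291 * (D ^ 2 / s).
Proof.
  intros HD Hq Hs Hqs HG.
  rewrite summand_deviation_identity by lra.
  rewrite Rabs_mult, (Rabs_pos_eq (D ^ 2)) by (apply pow_le; lra).
  replace (291 * (D ^ 2 / s)) with (D ^ 2 * (48 / s + 243 / s)) by (field; lra).
  apply Rmult_le_compat_l; [apply pow_le; lra|].
  eapply Rle_trans; [apply Rabs_triang|].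
  apply Rplus_le_compat; [apply cubic_deviation_bound | apply tail_deviation_bound]; assumption.
Qed.

Lemma floorZ_spec (r : R) : IZR (floorZ r) <= r < IZR (floorZ r) + 1.
Proof. unfold floorZ; destruct (base_Int_part r); lra. Qed.

Definition Kd_real (D x : R) : R := (D + sqrt (D ^ 2 + 4 * D * x)) / 2.

Lemma Kd_floor_spec (d : Z) (x : R) :
  IZR (Kd d x) <= Kd_real (IZR d) x < IZR (Kd d x) + 1.
Proof. apply floorZ_spec. Qed.

Lemma Kd_real_quadratic (D x : R) : 0 <= D -> 0 <= x ->
  Kd_real D x * (Kd_real D x - D) = D * x.
Proof.
  intros HD Hx; unfold Kd_real.
  pose proof (sqrt_sqrt (D ^ 2 + 4 * D * x) ltac:(nra)). nra.
Qed.

Lemma Kd_real_ge (D x : R) : 0 <= D -> 2 * D <= x -> 2 * D <= Kd_real D x.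
Proof.
  intros HD Hx; unfold Kd_real.
  assert (3 * D <= sqrt (D ^ 2 + 4 * D * x)).
  { rewrite <- (sqrt_square (3 * D)) by lra. apply sqrt_le_1_alt. nra. }
  lra.
Qed.

Lemma div_in_window (D x K0 k : R) : 0 < D -> D < K0 -> K0 * (K0 - D) = D * x ->
  K0 - D < k <= K0 -> K0 / D - 1 <= x / k < K0 / D.
Proof.
  intros HD HK0 Hroot Hk.
  assert (Hx : 0 < x).
  { assert (0 < D * x) by (rewrite <- Hroot; apply Rmult_lt_0_compat; lra). nra. }
  assert (Hxe : x = K0 * (K0 - D) / D) by (rewrite Hroot; field; lra).
  assert (Hlo : x / K0 = K0 / D - 1) by (rewrite Hxe; field; lra).
  assert (Hhi : x / (K0 - D) = K0 / D) by (rewrite Hxe; field; lra).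
  rewrite <- Hlo, <- Hhi. split.
  - apply Rmult_le_compat_l; [lra | apply Rinv_le_contravar; lra].
  - apply Rmult_lt_compat_l; [lra | apply Rinv_lt_contravar; nra].
Qed.

Lemma root_window (u s : R) : 1 <= u -> 0 <= s -> u * (u - 1) = s ^ 2 -> s < u <= s + 1.
Proof. intros Hu Hs Hus; split; nra. Qed.

Lemma floor_near_root (t u s : R) : 2 <= u -> s < u <= s + 1 -> u - 1 <= t < u ->
  (1 <= floorZ t)%Z /\ Rabs (IZR (floorZ t) - s) <= 2.
Proof.
  intros Hu Hsu Ht. pose proof (floorZ_spec t) as Hq. split.
  - apply le_IZR. assert (0 < IZR (floorZ t)) by lra.
    apply lt_IZR in H. apply IZR_le. lia.
  - apply Rabs_le. lra.
Qed.

Lemma summand_near_main (d : Z) (x : R) (k : Z) :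
  (0 < d)%Z -> IZR d <= x / 2 -> (Kd d x - d < k <= Kd d x)%Z ->
  Rabs (summand d x k - 8 / 3 * IZR d ^ 2 * sqrt (x / IZR d))
  <= 291 * (IZR d ^ 2 / sqrt (x / IZR d)).
Proof.
  intros Hd Hdx Hk.
  set (D := IZR d). set (s := sqrt (x / D)). set (K0 := Kd_real D x).
  assert (HD : 1 <= D) by (apply IZR_le; lia).
  assert (Hx : 2 * D <= x) by (unfold D; lra).
  assert (Hs2 : s ^ 2 = x / D) by (unfold s; rewrite <- Rsqr_pow2; apply Rsqr_sqrt, Rdiv_le_0_compat; lra).
  assert (Hs : 0 < s) by (apply sqrt_lt_R0, Rdiv_lt_0_compat; lra).
  assert (Hxs : x = D * s ^ 2) by (rewrite Hs2; field; lra).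
  assert (HK0 : 2 * D <= K0) by (apply Kd_real_ge; lra).
  assert (Hroot : K0 * (K0 - D) = D * x) by (apply Kd_real_quadratic; lra).
  assert (Hkwin : K0 - D < IZR k <= K0).
  { pose proof (Kd_floor_spec d x) as HK; fold D K0 in HK.
    assert (IZR (Kd d x - d + 1) <= IZR k <= IZR (Kd d x)) as Hk' by (split; apply IZR_le; lia).
    rewrite plus_IZR, minus_IZR in Hk'; fold D in Hk'; lra. }
  set (t := x / IZR k).
  assert (Ht : K0 / D - 1 <= t < K0 / D) by (apply div_in_window; lra).
  assert (Hu : K0 / D * (K0 / D - 1) = s ^ 2).
  { replace (K0 / D * (K0 / D - 1)) with (K0 * (K0 - D) / (D * D)) by (field; lra).
    rewrite Hroot, Hs2; field; lra. }
  assert (Hu2 : 2 <= K0 / D).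
  { replace 2 with (2 * D / D) by (field; lra).
    apply Rmult_le_compat_r; [apply Rlt_le, Rinv_0_lt_compat |]; lra. }
  destruct (floor_near_root t (K0 / D) s Hu2 (root_window (K0 / D) s ltac:(lra) ltac:(lra) Hu) Ht)
    as [Hz Hqs].
  pose proof (F_near_inv_cube _ t Hz (floorZ_spec t)) as HF.
  unfold summand; fold D t.
  rewrite Hxs. apply summand_deviation_bound; try assumption; try lra.
  apply IZR_le in Hz; exact Hz.
Qed.

Lemma sum_seq_deviation (g : nat -> R) (M B : R) (j n : nat) :
  (forall i, (j <= i < j + n)%nat -> Rabs (g i - M) <= B) ->
  Rabs (fold_right Rplus 0 (map g (seq j n)) - INR n * M) <= INR n * B.
Proof.
  revert j; induction n as [|n IH]; intros j Hg; cbn [seq map fold_right].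
  - rewrite INR_0, !Rmult_0_l, Rminus_0_r, Rabs_R0; lra.
  - rewrite S_INR.
    replace (g j + fold_right Rplus 0 (map g (seq (S j) n)) - (INR n + 1) * M)
      with ((g j - M) + (fold_right Rplus 0 (map g (seq (S j) n)) - INR n * M)) by ring.
    eapply Rle_trans; [apply Rabs_triang|].
    pose proof (Hg j ltac:(lia)).
    pose proof (IH (S j) (fun i Hi => Hg i ltac:(lia))). lra.
Qed.

Lemma sum_Ioc_deviation (a b : Z) (f : Z -> R) (M B : R) : (a <= b)%Z ->
  (forall k, (a < k <= b)%Z -> Rabs (f k - M) <= B) ->
  Rabs (sum_Ioc a b f - IZR (b - a) * M) <= IZR (b - a) * B.
Proof.
  intros Hab Hf. unfold sum_Ioc.
  replace (IZR (b - a)) with (INR (Z.to_nat (b - a))) by (rewrite INR_IZR_INZ, Z2Nat.id by lia; reflexivity).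
  apply sum_seq_deviation. intros i Hi. apply Hf. lia.
Qed.

Theorem proposition7 :
  exists C1 C2 : R,
    forall (d : Z) (x : R),
      (0 < d)%Z -> IZR d <= x / 2 ->
      Rabs (sum_Ioc (Kd d x - d)%Z (Kd d x) (summand d x)
            - 8 / 3 * IZR d ^ 2 * sqrt (IZR d * x))
      <= C1 * (IZR d ^ 3 * sqrt (IZR d) / sqrt x) + C2 * IZR d ^ 2.
Proof.
  exists 291, 0. intros d x Hd Hdx.
  assert (HD : 0 < IZR d) by (apply IZR_lt; lia).
  assert (Hx : 0 < x) by lra.
  pose proof (sum_Ioc_deviation (Kd d x - d) (Kd d x) (summand d x)
                (8 / 3 * IZR d ^ 2 * sqrt (x / IZR d)) (291 * (IZR d ^ 2 / sqrt (x / IZR d)))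
                ltac:(lia) (fun k => summand_near_main d x k Hd Hdx)) as Hsum.
  replace (Kd d x - (Kd d x - d))%Z with d in Hsum by ring.
  rewrite sqrt_div_alt in Hsum by exact HD. rewrite sqrt_mult_alt by lra.
  assert (Ha : 0 < sqrt (IZR d)) by (apply sqrt_lt_R0; exact HD).
  assert (Hb : 0 < sqrt x) by (apply sqrt_lt_R0; exact Hx).
  pose proof (sqrt_sqrt (IZR d) ltac:(lra)) as Haa.
  set (a := sqrt (IZR d)) in *. set (b := sqrt x) in *. rewrite <- Haa in Hsum |- *.
  replace (8 / 3 * (a * a) ^ 2 * (a * b)) with (a * a * (8 / 3 * (a * a) ^ 2 * (b / a))) by (field; lra).
  replace (291 * ((a * a) ^ 3 * a / b) + 0 * (a * a) ^ 2)
    with (a * a * (291 * ((a * a) ^ 2 / (b / a)))) by (field; lra).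
  exact Hsum.
Qed.
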